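(* Let $((A,\cdot),N)$ be a Nijenhuis algebra with multiplication $\mu$. Then there is a bijection between the set of equivalence classes of infinitesimal deformations of $((A,\cdot),N)$ and the second cohomology group $H^2_{\mathrm{NAlg}}((A,N))$.
   Context: Over a field $\mathbf{k}$ of characteristic $0$. A Nijenhuis algebra is an associative algebra $(A,\cdot)$ with linear $N$ satisfying $N(a)N(b)=N(N(a)b+aN(b)-N(ab))$. An infinitesimal deformation is a pair $\mu_t=\mu+t\mu_1$ ($\mu_1\in\mathrm{Hom}(A^{\otimes2},A)$), $N_t=N+tN_1$ ($N_1\in\mathrm{Hom}(A,A)$) such that $((A[t]/(t^2),\mu_t),N_t)$ is a Nijenhuis algebra over $\mathbf{k}[t]/(t^2)$. Two infinitesimal deformations $(\mu+t\mu_1,N+tN_1)$, $(\mu+t\mu'_1,N+tN'_1)$ are equivalent if there is a $\mathbf{k}[t]/(t^2)$-linear map $\varphi_t=\mathrm{Id}_A+t\varphi_1$ which is an isomorphism of Nijenhuis algebras between them (respects multiplications and intertwines $N_t$, $N'_t$). Cochain complex: $C^0_{\mathrm{NAlg}}((A,N))=0$, $C^1=\mathrm{Hom}(A,A)$, $C^n=\mathrm{Hom}(A^{\otimes n},A)\oplus\mathrm{Hom}(A^{\otimes n-1},A)$ for $n\ge2$; $\delta_{\mathrm{NAlg}}(f)=(\delta_{\mathrm{Hoch}}f,-\partial^Nf)$ for $f\in C^1$, $\delta_{\mathrm{NAlg}}(\chi,F)=(\delta_{\mathrm{Hoch}}\chi,\ d_NF+(-1)^n\partial^N\chi)$ for $(\chi,F)\in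 C^n$, $n\ge2$, where $(\delta_{\mathrm{Hoch}}f)(a_1,\dots,a_{n+1})=a_1f(a_2,\dots,a_{n+1})+\sum_{i=1}^n(-1)^if(\dots,a_ia_{i+1},\dots)+(-1)^{n+1}f(a_1,\dots,a_n)a_{n+1}$; $(d_NF)(a_1,\dots,a_{n+1})=N(a_1)F(a_2,\dots,a_{n+1})-(-1)^nF(a_1,\dots,a_n)N(a_{n+1})+\sum_{i=1}^n(-1)^iF(a_1,\dots,a_{i-1},N(a_i)a_{i+1}+a_iN(a_{i+1})-N(a_ia_{i+1}),\dots,a_{n+1})-N((\delta_{\mathrm{Hoch}}F)(a_1,\dots,a_{n+1}))$; $\partial^N(f)(a_1,\dots,a_n)=\sum_{S\subseteq\{1..n\}}(-1)^{|S|}N^{|S|}(f(b_1,\dots,b_n))$, $b_i=a_i$ for $i\in S$, $b_i=N(a_i)$ otherwise. $H^2_{\mathrm{NAlg}}((A,N))$ = 2-cocycles modulo 2-coboundaries. *)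

From HB Require Import structures.
From mathcomp Require Import all_boot all_order all_algebra.
Set Implicit Arguments. Unset Strict Implicit. Unset Printing Implicit Defensive.
Import GRing.Theory.
Local Open Scope ring_scope.

Definition klinear (k : fieldType) (A : lmodType k) (f : A -> A) : Prop :=
  forall (c : k) (x y : A), f (c *: x + y) = c *: f x + f y.

Definition kbilinear (k : fieldType) (A : lmodType k) (m : A -> A -> A) : Prop :=
  (forall (c : k) (x y z : A), m (c *: x + y) z = c *: m x z + m y z) /\
  (forall (c : k) (x y z : A), m z (c *: x + y) = c *: m z x + m z y).

Definition nijenhuis_identity (V : zmodType) (m : V -> V -> V) (N : V -> V) :=
  forall a b, m (N a) (N b) = N (m (N a) b + m a (N b) - N (m a b)).

Definition assoc_op (V : Type) (m : V -> V -> V) := forall a b c, m a (m b c) = m (m a b) c.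

Definition nijenhuis_algebra (k : fieldType) (A : lmodType k)
  (mu : A -> A -> A) (N : A -> A) : Prop :=
  kbilinear mu /\ assoc_op mu /\ klinear N /\ nijenhuis_identity mu N.

(* A[t]/(t^2) is modelled as A * A, (a, b) <-> a + t b.  The k[t]/(t^2)-bilinear
   extension of mu + t mu1 and the k[t]/(t^2)-linear extension of N + t N1 are: *)
Definition dmul (k : fieldType) (A : lmodType k) (mu mu1 : A -> A -> A)
  (x y : A * A) : A * A :=
  (mu x.1 y.1, mu x.1 y.2 + mu x.2 y.1 + mu1 x.1 y.1).

Definition dN (k : fieldType) (A : lmodType k) (N N1 : A -> A) (x : A * A) : A * A :=
  (N x.1, N x.2 + N1 x.1).

Definition dphi (k : fieldType) (A : lmodType k) (phi1 : A -> A) (x : A * A) : A * A :=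
  (x.1, x.2 + phi1 x.1).

Definition cochain2 (k : fieldType) (A : lmodType k) : Type := ((A -> A -> A) * (A -> A))%type.

Definition cochain2_sub (k : fieldType) (A : lmodType k) (c d : cochain2 A) : cochain2 A :=
  (fun a b => c.1 a b - d.1 a b, fun a => c.2 a - d.2 a).

Definition inf_deformation (k : fieldType) (A : lmodType k) (mu : A -> A -> A) (N : A -> A)
  (d : cochain2 A) : Prop :=
  kbilinear d.1 /\ klinear d.2 /\
  assoc_op (dmul mu d.1) /\ nijenhuis_identity (dmul mu d.1) (dN N d.2).

Definition deform_equiv (k : fieldType) (A : lmodType k) (mu : A -> A -> A) (N : A -> A)
  (d d' : cochain2 A) : Prop :=
  exists phi1 : A -> A, klinear phi1 /\
    (forall x y, dphi phi1 (dmul mu d.1 x y) = dmul mu d'.1 (dphi phi1 x) (dphi phi1 y)) /\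
    (forall x, dphi phi1 (dN N d.2 x) = dN N d'.2 (dphi phi1 x)).

Definition hoch1 (k : fieldType) (A : lmodType k) (mu : A -> A -> A) (f : A -> A)
  (a1 a2 : A) : A :=
  mu a1 (f a2) - f (mu a1 a2) + mu (f a1) a2.

Definition hoch2 (k : fieldType) (A : lmodType k) (mu : A -> A -> A) (chi : A -> A -> A)
  (a1 a2 a3 : A) : A :=
  mu a1 (chi a2 a3) - chi (mu a1 a2) a3 + chi a1 (mu a2 a3) - mu (chi a1 a2) a3.

Definition partialN1 (k : fieldType) (A : lmodType k) (N : A -> A) (f : A -> A) (a : A) : A :=
  f (N a) - N (f a).

(* partial^N for n = 2 : sum over S subset {1,2} *)
Definition partialN2 (k : fieldType) (A : lmodType k) (N : A -> A) (chi : A -> A -> A)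
  (a1 a2 : A) : A :=
  chi (N a1) (N a2) - N (chi a1 (N a2)) - N (chi (N a1) a2) + N (N (chi a1 a2)).

Definition dN1 (k : fieldType) (A : lmodType k) (mu : A -> A -> A) (N : A -> A) (F : A -> A)
  (a1 a2 : A) : A :=
  mu (N a1) (F a2) + mu (F a1) (N a2)
  - F (mu (N a1) a2 + mu a1 (N a2) - N (mu a1 a2))
  - N (hoch1 mu F a1 a2).

(* 2-cocycles: (chi, F) in C^2 with delta_NAlg (chi, F) = (hoch chi, d_N F + partial^N chi) = 0 *)
Definition NAlg_2cocycle (k : fieldType) (A : lmodType k) (mu : A -> A -> A) (N : A -> A)
  (c : cochain2 A) : Prop :=
  kbilinear c.1 /\ klinear c.2 /\
  (forall a1 a2 a3, hoch2 mu c.1 a1 a2 a3 = 0) /\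
  (forall a1 a2, dN1 mu N c.2 a1 a2 + partialN2 N c.1 a1 a2 = 0).

(* 2-coboundaries: delta_NAlg f = (hoch f, - partial^N f) for f in C^1 = Hom(A,A) *)
Definition NAlg_2coboundary (k : fieldType) (A : lmodType k) (mu : A -> A -> A) (N : A -> A)
  (c : cochain2 A) : Prop :=
  exists f : A -> A, klinear f /\
    (forall a1 a2, c.1 a1 a2 = hoch1 mu f a1 a2) /\
    (forall a, c.2 a = - partialN1 N f a).

From HB Require Import structures.
From mathcomp Require Import all_boot all_order all_algebra ring.
Import GRing.Theory.
Set Implicit Arguments. Unset Strict Implicit.
Local Open Scope ring_scope.

(* An infinitesimal deformation is read off its t-coefficients: expanding
   associativity and the Nijenhuis identity of (mu + t mu1, N + t N1) in
   A[t]/(t^2), the t^0 parts hold because (A, mu, N) is a Nijenhuis algebra and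
   the t^1 parts are exactly the two components of the cocycle condition
   delta_NAlg (mu1, N1) = 0.  Likewise, Id + t phi1 intertwines two
   deformations iff (mu1 - mu1', N1 - N1') = delta_NAlg phi1.  Hence the
   identity map on cochains sends deformations onto 2-cocycles, and equivalent
   deformations onto cohomologous ones. *)

Section TrivialExtension.
Variable V : zmodType.

(* The trivial extension Z ⋉ V, in which V squares to zero: an identity
   between integer combinations of elements of V holds iff its image in this
   commutative ring does, and the latter is decided by [ring]. *)
Definition trivial_ext := (int * V)%type.
HB.instance Definition _ := GRing.Zmodule.on trivial_ext.

Definition trivial_ext_mul (x y : trivial_ext) : trivial_ext :=
  (x.1 * y.1, y.2 *~ x.1 + x.2 *~ y.1).

Lemma trivial_ext_mulA : associative trivial_ext_mul.
Proof.
move=> [a x] [b y] [c z]; rewrite /trivial_ext_mul /=; congr pair.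
  by rewrite mulrA.
rewrite !mulrzDl -!mulrzA addrA; congr (_ + _ + _); congr (_ *~ _); exact: mulrC.
Qed.

Lemma trivial_ext_mulC : commutative trivial_ext_mul.
Proof. by move=> [a x] [b y]; rewrite /trivial_ext_mul /= mulrC addrC. Qed.

Lemma trivial_ext_mul1 : left_id (1, 0) trivial_ext_mul.
Proof. by move=> [b y]; rewrite /trivial_ext_mul /= mul1r mul0rz addr0. Qed.

Lemma trivial_ext_mulDl : left_distributive trivial_ext_mul +%R.
Proof.
move=> [a x] [a' x'] [b y]; rewrite /trivial_ext_mul /=; congr pair.
  by rewrite mulrDl.
by rewrite mulrzDr mulrzDl addrACA.
Qed.

HB.instance Definition _ := GRing.Zmodule_isComPzRing.Build trivial_ext
  trivial_ext_mulA trivial_ext_mulC trivial_ext_mul1 trivial_ext_mulDl.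

Definition trivial_ext_inj (v : V) : trivial_ext := (0, v).

Lemma trivial_ext_inj_inj : injective trivial_ext_inj.
Proof. by move=> u v []. Qed.

Lemma trivial_ext_injD u v :
  trivial_ext_inj (u + v) = trivial_ext_inj u + trivial_ext_inj v.
Proof. by rewrite /trivial_ext_inj; congr pair; rewrite /= addr0. Qed.

Lemma trivial_ext_injN v : trivial_ext_inj (- v) = - trivial_ext_inj v.
Proof. by rewrite /trivial_ext_inj; congr pair; rewrite /= oppr0. Qed.

Lemma trivial_ext_inj0 : trivial_ext_inj 0 = 0.
Proof. by []. Qed.

End TrivialExtension.

Ltac zmod_ring := apply: trivial_ext_inj_inj;
  rewrite ?(trivial_ext_injD, trivial_ext_injN, trivial_ext_inj0); ring.

Lemma eq_of_subr_eq (V : zmodType) (l r x y : V) : l = r -> x - y = l - r -> x = y.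
Proof. by move=> -> /eqP; rewrite subrr subr_eq0 => /eqP. Qed.

Section Linearity.
Variables (k : fieldType) (A : lmodType k).

Lemma klinearD (f : A -> A) : klinear f -> forall x y, f (x + y) = f x + f y.
Proof. by move=> f_lin x y; rewrite -{1}[x]scale1r f_lin scale1r. Qed.

Lemma klinear0 (f : A -> A) : klinear f -> f 0 = 0.
Proof.
move=> f_lin; apply: (addrI (f 0)).
by rewrite -klinearD // !addr0.
Qed.

Lemma klinearN (f : A -> A) : klinear f -> forall x, f (- x) = - f x.
Proof.
by move=> f_lin x; have := f_lin (-1) x 0; rewrite !addr0 klinear0 // addr0 !scaleN1r.
Qed.

Lemma kbilinear_l (m : A -> A -> A) : kbilinear m -> forall z, klinear (m ^~ z).
Proof. by case=> m_l _ z c x y; apply: m_l. Qed.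

Lemma kbilinear_r (m : A -> A -> A) : kbilinear m -> forall z, klinear (m z).
Proof. by case=> _ m_r z c x y; apply: m_r. Qed.

End Linearity.

Ltac expand_linear := repeat match goal with
 | H : klinear ?f |- context [?f (?x + ?y)] => rewrite (klinearD H x y)
 | H : klinear ?f |- context [?f (- ?x)] => rewrite (klinearN H x)
 | H : klinear ?f |- context [?f 0] => rewrite (klinear0 H)
 | H : kbilinear ?m |- context [?m (?x + ?y) ?z] => rewrite (klinearD (kbilinear_l H z) x y)
 | H : kbilinear ?m |- context [?m ?z (?x + ?y)] => rewrite (klinearD (kbilinear_r H z) x y)
 | H : kbilinear ?m |- context [?m (- ?x) ?z] => rewrite (klinearN (kbilinear_l H z) x)
 | H : kbilinear ?m |- context [?m ?z (- ?x)] => rewrite (klinearN (kbilinear_r H z) x)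
 | H : kbilinear ?m |- context [?m 0 ?z] => rewrite (klinear0 (kbilinear_l H z))
 | H : kbilinear ?m |- context [?m ?z 0] => rewrite (klinear0 (kbilinear_r H z))
 end.

Section Deformations.
Variables (k : fieldType) (A : lmodType k) (mu : A -> A -> A) (N : A -> A).
Hypotheses (mu_bilin : kbilinear mu) (mu_assoc : assoc_op mu).
Hypotheses (N_lin : klinear N) (N_nijenhuis : nijenhuis_identity mu N).

Lemma dmul_assoc_hoch2 (mu1 : A -> A -> A) :
  assoc_op (dmul mu mu1) <-> forall a1 a2 a3, hoch2 mu mu1 a1 a2 a3 = 0.
Proof.
rewrite /hoch2; split=> [assoc1 a1 a2 a3 | hoch1_0 [x1 x2] [y1 y2] [z1 z2]].
  have /(congr1 snd) := assoc1 (a1, 0) (a2, 0) (a3, 0); rewrite /dmul /= => E.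
  by apply: (eq_of_subr_eq E); expand_linear; zmod_ring.
rewrite /dmul /=; congr pair; first exact: mu_assoc.
apply: (eq_of_subr_eq (hoch1_0 x1 y1 z1)).
apply: (eq_of_subr_eq (mu_assoc x1 y1 z2)); apply: (eq_of_subr_eq (mu_assoc x1 y2 z1)).
apply: (eq_of_subr_eq (mu_assoc x2 y1 z1)).
by expand_linear; zmod_ring.
Qed.

Lemma dN_nijenhuis_dN1 (mu1 : A -> A -> A) (N1 : A -> A) :
  nijenhuis_identity (dmul mu mu1) (dN N N1) <->
  forall a1 a2, dN1 mu N N1 a1 a2 + partialN2 N mu1 a1 a2 = 0.
Proof.
rewrite /dN1 /hoch1 /partialN2.
split=> [nij1 a1 a2 | cocycle [x1 x2] [y1 y2]].
  have /(congr1 snd) := nij1 (a1, 0) (a2, 0); rewrite /dmul /dN /= => E.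
  by apply: (eq_of_subr_eq E); expand_linear; zmod_ring.
rewrite /dmul /dN /=; congr pair; first exact: N_nijenhuis.
apply: (eq_of_subr_eq (cocycle x1 y1)).
apply: (eq_of_subr_eq (N_nijenhuis x1 y2)); apply: (eq_of_subr_eq (N_nijenhuis x2 y1)).
by expand_linear; zmod_ring.
Qed.

Lemma dphi_dmul_hoch1 (phi1 : A -> A) (mu1 mu1' : A -> A -> A) :
  (forall x y, dphi phi1 (dmul mu mu1 x y) = dmul mu mu1' (dphi phi1 x) (dphi phi1 y)) <->
  forall a1 a2, mu1 a1 a2 - mu1' a1 a2 = hoch1 mu phi1 a1 a2.
Proof.
rewrite /hoch1; split=> [intertwine a1 a2 | cobound [x1 x2] [y1 y2]].
  have /(congr1 snd) := intertwine (a1, 0) (a2, 0); rewrite /dmul /dphi /= => E.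
  by apply: (eq_of_subr_eq E); expand_linear; zmod_ring.
rewrite /dmul /dphi /=; congr pair.
by apply: (eq_of_subr_eq (cobound x1 y1)); expand_linear; zmod_ring.
Qed.

Lemma dphi_dN_partialN1 (phi1 N1 N1' : A -> A) :
  (forall x, dphi phi1 (dN N N1 x) = dN N N1' (dphi phi1 x)) <->
  forall a, N1 a - N1' a = - partialN1 N phi1 a.
Proof.
rewrite /partialN1; split=> [intertwine a | cobound [x1 x2]].
  have /(congr1 snd) := intertwine (a, 0); rewrite /dN /dphi /= => E.
  by apply: (eq_of_subr_eq E); expand_linear; zmod_ring.
rewrite /dN /dphi /=; congr pair.
by apply: (eq_of_subr_eq (cobound x1)); expand_linear; zmod_ring.
Qed.

Lemma inf_deformation_2cocycle (d : cochain2 A) :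
  inf_deformation mu N d <-> NAlg_2cocycle mu N d.
Proof.
by split=> -[? [? [/dmul_assoc_hoch2 ? /dN_nijenhuis_dN1 ?]]]; do 3 split=> //.
Qed.

Lemma deform_equiv_2coboundary (d d' : cochain2 A) :
  deform_equiv mu N d d' <-> NAlg_2coboundary mu N (cochain2_sub d d').
Proof.
by split=> -[phi1 [? [/dphi_dmul_hoch1 ? /dphi_dN_partialN1 ?]]]; exists phi1.
Qed.

Lemma NAlg_2coboundary_sub_self (c : cochain2 A) :
  NAlg_2coboundary mu N (cochain2_sub c c).
Proof.
exists (fun=> 0); split; first by move=> c' x y; rewrite scaler0 addr0.
by split=> [a1 a2 | a]; rewrite /= /hoch1 /partialN1 subrr; expand_linear; zmod_ring.
Qed.

End Deformations.

Theorem theorem4p2 (k : fieldType) (Hchar : [pchar k] =i pred0) (A : lmodType k)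
  (mu : A -> A -> A) (N : A -> A) (HA : nijenhuis_algebra mu N) :
  exists Phi : cochain2 A -> cochain2 A,
    (forall d, inf_deformation mu N d -> NAlg_2cocycle mu N (Phi d)) /\
    (forall d d', inf_deformation mu N d -> inf_deformation mu N d' ->
       (deform_equiv mu N d d' <-> NAlg_2coboundary mu N (cochain2_sub (Phi d) (Phi d')))) /\
    (forall c, NAlg_2cocycle mu N c ->
       exists d, inf_deformation mu N d /\ NAlg_2coboundary mu N (cochain2_sub (Phi d) c)).
Proof.
case: HA => mu_bilin [mu_assoc [N_lin N_nijenhuis]].
have cocycleE := inf_deformation_2cocycle mu_bilin mu_assoc N_lin N_nijenhuis.
exists id; split; last split.
- by move=> d /cocycleE.
- by move=> d d' _ _; apply: deform_equiv_2coboundary.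
- move=> c /cocycleE c_deformation; exists c; split=> //.
  exact: NAlg_2coboundary_sub_self.
Qed.
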